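(* Let $0<\lambda\le\Lambda$ and let $u\in C(\overline{Q_1})$ be a (viscosity) solution of $u_t-a_{ij}(x,t)u_{ij}=0$ in $Q_1$, where the measurable coefficients satisfy $\lambda I\le(a_{ij}(x,t))\le\Lambda I$ in $Q_1$. Let $A>0$ and assume that for every $t\in[-1,0]$, $$\operatorname{osc}_{x\in B_1}u(x,t)\le A.$$ Then $\operatorname{osc}_{Q_1}u\le CA$, where $C>0$ depends only on $\Lambda$ and $n$.
   Context: $\operatorname{osc}_E u=\sup_E u-\inf_E u$. $B_1$ is the unit ball of $\mathbb{R}^n$ centered at $0$, $Q_1=B_1\times(-1,0]$; $u_{ij}=\partial_{x_ix_j}u$, summation over repeated indices. *)

From Stdlib Require Import Reals.
Open Scope R_scope.

(* Points of R^n are represented as functions nat -> R vanishing at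
   indices >= n. *)
Definition Pt := nat -> R.

Definition in_Rn (n : nat) (x : Pt) : Prop := forall i, (n <= i)%nat -> x i = 0.

Fixpoint sumR (n : nat) (f : nat -> R) : R :=
  match n with
  | O => 0
  | S k => sumR k f + f k
  end.

Definition sqnorm (n : nat) (x : Pt) : R := sumR n (fun i => x i * x i).

Definition vsub (x y : Pt) : Pt := fun i => x i - y i.
Definition vadd_dir (x : Pt) (i : nat) (s : R) : Pt :=
  fun k => if Nat.eqb k i then x k + s else x k.

Definition inB1 (n : nat) (x : Pt) : Prop := in_Rn n x /\ sqnorm n x < 1.
Definition inB1bar (n : nat) (x : Pt) : Prop := in_Rn n x /\ sqnorm n x <= 1.

Definition inQ1 (n : nat) (x : Pt) (t : R) : Prop := inB1 n x /\ -1 < t <= 0.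
Definition inQ1bar (n : nat) (x : Pt) (t : R) : Prop := inB1bar n x /\ -1 <= t <= 0.

Definition continuous_on_Q1bar (n : nat) (u : Pt -> R -> R) : Prop :=
  forall x t, inQ1bar n x t ->
    forall eps, 0 < eps -> exists del, 0 < del /\
      forall y s, inQ1bar n y s -> sqnorm n (vsub y x) < del * del ->
        Rabs (s - t) < del -> Rabs (u y s - u x t) < eps.

(* phi is C^{2,1} on R^n x R, with partial derivatives phix i (= d/dx_i),
   phixx i j (= d/dx_j d/dx_i), phit (= d/dt); second space derivatives and
   the time derivative are (jointly) continuous. *)
Definition C21 (n : nat) (phi : Pt -> R -> R) (phix : nat -> Pt -> R -> R)
  (phixx : nat -> nat -> Pt -> R -> R) (phit : Pt -> R -> R) : Prop :=
  (forall x t, in_Rn n x -> forall i, (i < n)%nat ->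
     derivable_pt_lim (fun s => phi (vadd_dir x i s) t) 0 (phix i x t)) /\
  (forall x t, in_Rn n x -> forall i j, (i < n)%nat -> (j < n)%nat ->
     derivable_pt_lim (fun s => phix i (vadd_dir x j s) t) 0 (phixx i j x t)) /\
  (forall x t, in_Rn n x ->
     derivable_pt_lim (fun s => phi x s) t (phit x t)) /\
  (forall x t, in_Rn n x -> forall eps, 0 < eps -> exists del, 0 < del /\
     forall y s, in_Rn n y -> sqnorm n (vsub y x) < del * del -> Rabs (s - t) < del ->
       Rabs (phit y s - phit x t) < eps /\
       (forall i j, (i < n)%nat -> (j < n)%nat ->
          Rabs (phixx i j y s - phixx i j x t) < eps)).

Definition in_pnbhd (n : nat) (r : R) (x0 : Pt) (t0 : R) (y : Pt) (s : R) : Prop :=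
  inQ1 n y s /\ sqnorm n (vsub y x0) < r * r /\ t0 - r < s <= t0.

Definition Lop (n : nat) (a : nat -> nat -> Pt -> R -> R)
  (phixx : nat -> nat -> Pt -> R -> R) (phit : Pt -> R -> R) (x : Pt) (t : R) : R :=
  phit x t - sumR n (fun i => sumR n (fun j => a i j x t * phixx i j x t)).

Definition visc_sub (n : nat) (a : nat -> nat -> Pt -> R -> R) (u : Pt -> R -> R) : Prop :=
  forall phi phix phixx phit x0 t0, C21 n phi phix phixx phit -> inQ1 n x0 t0 ->
    phi x0 t0 = u x0 t0 ->
    (exists r, 0 < r /\ forall y s, in_pnbhd n r x0 t0 y s -> u y s <= phi y s) ->
    Lop n a phixx phit x0 t0 <= 0.

Definition visc_super (n : nat) (a : nat -> nat -> Pt -> R -> R) (u : Pt -> R -> R) : Prop :=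
  forall phi phix phixx phit x0 t0, C21 n phi phix phixx phit -> inQ1 n x0 t0 ->
    phi x0 t0 = u x0 t0 ->
    (exists r, 0 < r /\ forall y s, in_pnbhd n r x0 t0 y s -> phi y s <= u y s) ->
    0 <= Lop n a phixx phit x0 t0.

Definition visc_solution (n : nat) (a : nat -> nat -> Pt -> R -> R) (u : Pt -> R -> R) : Prop :=
  visc_sub n a u /\ visc_super n a u.

Definition unif_elliptic (n : nat) (lam Lam : R) (a : nat -> nat -> Pt -> R -> R) : Prop :=
  forall x t, inQ1 n x t ->
    (forall i j, a i j x t = a j i x t) /\
    (forall xi : Pt,
       lam * sqnorm n xi <= sumR n (fun i => sumR n (fun j => a i j x t * xi i * xi j)) /\
       sumR n (fun i => sumR n (fun j => a i j x t * xi i * xi j)) <= Lam * sqnorm n xi).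

Definition osc_B1_le (n : nat) (u : Pt -> R -> R) (t A : R) : Prop :=
  forall x y, inB1 n x -> inB1 n y -> u x t - u y t <= A.

Definition osc_Q1_le (n : nat) (u : Pt -> R -> R) (B : R) : Prop :=
  forall x t y s, inQ1 n x t -> inQ1 n y s -> u x t - u y s <= B.

From Stdlib Require Import Reals Lra Lia FunctionalExtensionality.
Open Scope R_scope.
From mathcomp Require all_boot all_order all_algebra all_classical all_reals all_analysis.
From mathcomp Require Rstruct Rstruct_topology.

(* Fix -1 <= s <= t <= 0 and compare the subsolution u with the paraboloid
     phi(x, tau) = u(0, s) + A + k |x|^2 + L (tau - s)
   on the cylinder [-h, h]^n x [s, t], where h = 1/(2n) keeps the cube inside B_1,
   k h^2 = 2A and L = 2 k n Lambda + A.  Let (x0, tau0) maximise u - phi there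
   (a compact set).  On the lateral boundary k |x0|^2 >= 2A exceeds the spatial
   oscillation of u, so x0 is interior; if tau0 > s, the paraboloid shifted by
   max (u - phi) touches u from above on a parabolic neighbourhood, and the
   viscosity inequality contradicts phi_t - a_ij phi_ij >= L - 2 k n Lambda = A > 0.
   Hence tau0 = s, where u - phi <= 0, giving u(0, t) <= u(0, s) + A + L.  Applied
   to the subsolution -u this bounds |u(0, t) - u(0, s)| by A + L, and two more
   uses of the oscillation hypothesis give osc_{Q_1} u <= (4 + 16 n^3 Lambda) A. *)

Definition inbox (N : nat) (lo hi : nat -> R) (p : nat -> R) : Prop :=
  (forall i, (i < N)%nat -> lo i <= p i <= hi i) /\ (forall i, (N <= i)%nat -> p i = 0).

Definition continuous_within (N : nat) (D : (nat -> R) -> Prop) (g : (nat -> R) -> R) : Prop :=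
  forall p, D p -> forall eps, 0 < eps -> exists d, 0 < d /\
    forall q, D q -> (forall i, (i < N)%nat -> Rabs (q i - p i) < d) ->
      Rabs (g q - g p) < eps.

Module BoxMax.
Import all_boot all_order all_algebra all_classical all_reals all_analysis Rstruct Rstruct_topology.
Import Order.TTheory GRing.Theory Num.Theory.
Import numFieldNormedType.Exports.
Local Open Scope classical_set_scope.
Local Open Scope ring_scope.

(* Row vectors of length N are the points p : nat -> R with p i = 0 for i >= N. *)
Definition of_row {N : nat} (v : 'rV[R]_N) (k : nat) : R :=
  if (insub k : option 'I_N) is Some j then v ord0 j else 0.

Lemma of_row_ord N (v : 'rV[R]_N) (j : 'I_N) : of_row v j = v ord0 j.
Proof. by rewrite /of_row valK. Qed.

Lemma of_row_ge N (v : 'rV[R]_N) k : (N <= k)%N -> of_row v k = 0.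
Proof. by move=> Nk; rewrite /of_row insubF // ltnNge Nk. Qed.

Lemma of_row_row N (q : nat -> R) : (forall i, (N <= i)%coq_nat -> q i = 0) ->
  of_row (\row_(j < N) q j) = q.
Proof.
move=> q0; apply: functional_extensionality => i.
case: (ltnP i N) => [iN|Ni]; first by rewrite -[i]/(nat_of_ord (Ordinal iN)) of_row_ord mxE.
by rewrite of_row_ge // q0 //; apply/ssrnat.leP.
Qed.

Lemma inbox_of_row N lo hi (v : 'rV[R]_N) :
  inbox N lo hi (of_row v) <-> forall j : 'I_N, `[lo j, hi j]%classic (v ord0 j).
Proof.
split=> [[Hv _] j | Hv]; first by rewrite /= in_itv /= -of_row_ord;
  case: (Hv j (ssrnat.ltP (ltn_ord j))) => /RleP -> /RleP.
split=> [i /ssrnat.ltP iN | i /ssrnat.leP Ni]; last exact: of_row_ge.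
by move: (Hv (Ordinal iN)); rewrite /= in_itv /= -of_row_ord => /andP[/RleP ? /RleP ?].
Qed.

Lemma box_max N lo hi (g : (nat -> R) -> R) :
  (forall i, (i < N)%coq_nat -> Rle (lo i) (hi i)) ->
  continuous_within N (inbox N lo hi) g ->
  exists c, inbox N lo hi c /\ forall q, inbox N lo hi q -> Rle (g q) (g c).
Proof.
move=> lohi gc.
set A := [set v : 'rV[R]_N | inbox N lo hi (of_row v)].
have A0 : A !=set0.
  exists (\row_(j < N) lo j); apply/inbox_of_row => j.
  by rewrite mxE /= in_itv /= lexx; apply/RleP/lohi/ssrnat.ltP.
have cA : compact A.
  have -> : A = [set v | forall j : 'I_N, `[lo j, hi j]%classic (v ord0 j)].
    by apply/seteqP; split=> v /inbox_of_row.
  by apply: (@rV_compact _ N (fun j => `[lo j, hi j]%classic)) => j; exact: segment_compact.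
have cf : {within A, continuous (g \o of_row)}.
  apply/subspace_continuousP => v Av; apply/(@cvgrPdist_lt _ R^o) => e /RltP e0.
  have [d [/RltP d0 Hd]] := gc _ Av e e0.
  rewrite near_withinE; near=> w => Aw.
  have [_ /= wv] : ball v d w by near: w; exact: nbhsx_ballx.
  rewrite distrC -RabsE; apply/RltP/Hd => // i /ssrnat.ltP iN.
  rewrite -[i]/(nat_of_ord (Ordinal iN)) !of_row_ord RabsE distrC; apply/RltP.
  exact: wv.
have [c /set_mem Ac Hc] := EVT_max_rV A0 cA cf.
exists (of_row c); split=> // q Hq; apply/RleP.
by rewrite -(of_row_row N q (proj2 Hq)); apply/Hc/mem_set; rewrite /A /= of_row_row //; case: Hq.
Unshelve. all: by end_near.
Qed.
End BoxMax.

From Coquelicot Require Import Coquelicot.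

Lemma sumR_ext n f g : (forall i, (i < n)%nat -> f i = g i) -> sumR n f = sumR n g.
Proof.
  induction n as [|n IH]; intros H; simpl; [reflexivity|].
  rewrite IH, H; [reflexivity|lia|intros; apply H; lia].
Qed.

Lemma sumR_le n f g : (forall i, (i < n)%nat -> f i <= g i) -> sumR n f <= sumR n g.
Proof.
  induction n as [|n IH]; intros H; simpl; [lra|].
  apply Rplus_le_compat; [apply IH; intros; apply H|apply H]; lia.
Qed.

Lemma sumR_plus n f g : sumR n (fun i => f i + g i) = sumR n f + sumR n g.
Proof. induction n as [|n IH]; simpl; [ring|]. rewrite IH. ring. Qed.

Lemma sumR_scal n c f : sumR n (fun i => c * f i) = c * sumR n f.
Proof. induction n as [|n IH]; simpl; [ring|]. rewrite IH. ring. Qed.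

Lemma sumR_const n c : sumR n (fun _ => c) = INR n * c.
Proof. induction n as [|n IH]; cbn [sumR]; [simpl; ring|]. rewrite IH, S_INR. ring. Qed.

Lemma sumR_delta n i c : (i < n)%nat -> sumR n (fun j => if Nat.eqb j i then c else 0) = c.
Proof.
  induction n as [|n IH]; intros Hi; simpl; [lia|].
  destruct (Nat.eqb_spec n i) as [->|Hne].
  - rewrite (sumR_ext i _ (fun _ => 0)), sumR_const; [ring|].
    intros j Hj. destruct (Nat.eqb_spec j i); [lia|reflexivity].
  - rewrite IH by lia. ring.
Qed.

Lemma sumR_nonneg n f : (forall i, (i < n)%nat -> 0 <= f i) -> 0 <= sumR n f.
Proof. intros H. rewrite <- (Rmult_0_r (INR n)), <- sumR_const. now apply sumR_le. Qed.

Lemma sqnorm_nonneg n x : 0 <= sqnorm n x.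
Proof. apply sumR_nonneg. intros; nra. Qed.

Lemma sqnorm_ge_coord n x i : (i < n)%nat -> x i * x i <= sqnorm n x.
Proof.
  unfold sqnorm. induction n as [|n IH]; intros Hi; simpl; [lia|].
  assert (0 <= sumR n (fun j => x j * x j)) by (apply sumR_nonneg; intros; nra).
  destruct (Nat.eq_dec i n) as [->|Hne]; [lra|].
  assert (x i * x i <= sumR n (fun j => x j * x j)) by (apply IH; lia). nra.
Qed.

Lemma sqnorm_le_coord_bound n x d :
  (forall i, (i < n)%nat -> Rabs (x i) <= d) -> sqnorm n x <= INR n * (d * d).
Proof.
  intros H. rewrite <- sumR_const. apply sumR_le. intros i Hi.
  pose proof (Rsqr_abs (x i)) as Hsq. pose proof (Rabs_pos (x i)). pose proof (H i Hi).
  unfold Rsqr in Hsq. nra.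
Qed.

Lemma sqnorm_vadd_dir n x i s : (i < n)%nat ->
  sqnorm n (vadd_dir x i s) = sqnorm n x + (2 * s * x i + s * s).
Proof.
  intros Hi. unfold sqnorm.
  rewrite (sumR_ext n _ (fun j => x j * x j + (if Nat.eqb j i then 2 * s * x i + s * s else 0))).
  - rewrite sumR_plus, sumR_delta by exact Hi. reflexivity.
  - intros j _. unfold vadd_dir. destruct (Nat.eqb_spec j i); [subst|]; ring.
Qed.

Lemma Rabs_lt_of_sq_lt x r : 0 < r -> x * x < r * r -> Rabs x < r.
Proof. intros Hr H. unfold Rabs. destruct (Rcase_abs x); nra. Qed.

Section ContinuousWithin.
Variables (N : nat) (D : (nat -> R) -> Prop).

Lemma continuous_within_const c : continuous_within N D (fun _ => c).
Proof.
  intros p _ eps Heps. exists 1. split; [lra|]. intros q _ _.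
  rewrite Rminus_diag, Rabs_R0. exact Heps.
Qed.

Lemma continuous_within_coord i : (i < N)%nat -> continuous_within N D (fun p => p i).
Proof. intros Hi p _ eps Heps. exists eps. split; [exact Heps|]. intros q _ Hq. now apply Hq. Qed.

Lemma continuous_within_plus f g :
  continuous_within N D f -> continuous_within N D g ->
  continuous_within N D (fun p => f p + g p).
Proof.
  intros Hf Hg p Hp eps Heps.
  destruct (Hf p Hp (eps / 2)) as [d1 [Hd1 Hf']]; [lra|].
  destruct (Hg p Hp (eps / 2)) as [d2 [Hd2 Hg']]; [lra|].
  exists (Rmin d1 d2). split; [now apply Rmin_pos|]. intros q Hq Hqp.
  assert (Df := Hf' q Hq ltac:(intros i Hi; eapply Rlt_le_trans; [apply Hqp, Hi|apply Rmin_l])).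
  assert (Dg := Hg' q Hq ltac:(intros i Hi; eapply Rlt_le_trans; [apply Hqp, Hi|apply Rmin_r])).
  replace (f q + g q - (f p + g p)) with ((f q - f p) + (g q - g p)) by ring.
  pose proof (Rabs_triang (f q - f p) (g q - g p)). lra.
Qed.

Lemma continuous_within_scal c f :
  continuous_within N D f -> continuous_within N D (fun p => c * f p).
Proof.
  intros Hf p Hp eps Heps.
  destruct (Hf p Hp (eps / (Rabs c + 1))) as [d [Hd Hf']].
  { apply Rdiv_lt_0_compat; [exact Heps|]. pose proof (Rabs_pos c). lra. }
  exists d. split; [exact Hd|]. intros q Hq Hqp.
  replace (c * f q - c * f p) with (c * (f q - f p)) by ring. rewrite Rabs_mult.
  specialize (Hf' q Hq Hqp). pose proof (Rabs_pos c) as Hc.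
  assert (Hpos : 0 < eps / (Rabs c + 1)) by (apply Rdiv_lt_0_compat; lra).
  assert (Hle : Rabs c * Rabs (f q - f p) <= Rabs c * (eps / (Rabs c + 1)))
    by (apply Rmult_le_compat_l; lra).
  replace (Rabs c * (eps / (Rabs c + 1))) with (eps - eps / (Rabs c + 1)) in Hle by (field; lra).
  lra.
Qed.

Lemma continuous_within_minus f g :
  continuous_within N D f -> continuous_within N D g ->
  continuous_within N D (fun p => f p - g p).
Proof.
  intros Hf Hg.
  replace (fun p => f p - g p) with (fun p => f p + -1 * g p)
    by (apply functional_extensionality; intros; ring).
  now apply continuous_within_plus, continuous_within_scal.
Qed.

Lemma continuous_within_mult f g :
  continuous_within N D f -> continuous_within N D g ->
  continuous_within N D (fun p => f p * g p).
Proof.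
  intros Hf Hg p Hp eps Heps.
  pose proof (Rabs_pos (f p)) as Hfp. pose proof (Rabs_pos (g p)) as Hgp.
  set (ef := eps / (2 * (Rabs (g p) + 1))).
  set (eg := eps / (2 * (Rabs (f p) + 1))).
  assert (Hef : 0 < ef) by (apply Rdiv_lt_0_compat; lra).
  assert (Heg : 0 < eg) by (apply Rdiv_lt_0_compat; lra).
  destruct (Hf p Hp ef Hef) as [d1 [Hd1 Hf']].
  destruct (Hg p Hp (Rmin 1 eg)) as [d2 [Hd2 Hg']]; [now apply Rmin_pos; lra|].
  exists (Rmin d1 d2). split; [now apply Rmin_pos|]. intros q Hq Hqp.
  assert (Df := Hf' q Hq ltac:(intros i Hi; eapply Rlt_le_trans; [apply Hqp, Hi|apply Rmin_l])).
  assert (Dg := Hg' q Hq ltac:(intros i Hi; eapply Rlt_le_trans; [apply Hqp, Hi|apply Rmin_r])).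
  pose proof (Rmin_l 1 eg). pose proof (Rmin_r 1 eg).
  assert (Hgq : Rabs (g q) <= Rabs (g p) + 1).
  { replace (g q) with (g p + (g q - g p)) by ring.
    pose proof (Rabs_triang (g p) (g q - g p)). lra. }
  assert (T1 : Rabs (f q - f p) * Rabs (g q) < eps / 2).
  { replace (eps / 2) with (ef * (Rabs (g p) + 1)) by (unfold ef; field; lra).
    pose proof (Rabs_pos (f q - f p)). pose proof (Rabs_pos (g q)). nra. }
  assert (T2 : Rabs (f p) * Rabs (g q - g p) <= eps / 2).
  { apply Rle_trans with (Rabs (f p) * eg); [apply Rmult_le_compat_l; lra|].
    replace (Rabs (f p) * eg) with (eps / 2 - eg) by (unfold eg; field; lra). lra. }
  replace (f q * g q - f p * g p) with ((f q - f p) * g q + f p * (g q - g p)) by ring.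
  pose proof (Rabs_triang ((f q - f p) * g q) (f p * (g q - g p))) as Htri.
  rewrite !Rabs_mult in Htri. lra.
Qed.

Lemma continuous_within_sumR m (f : nat -> (nat -> R) -> R) :
  (forall i, (i < m)%nat -> continuous_within N D (f i)) ->
  continuous_within N D (fun p => sumR m (fun i => f i p)).
Proof.
  induction m as [|m IH]; intros Hf; simpl.
  - apply continuous_within_const.
  - apply continuous_within_plus; [apply IH; intros; apply Hf; lia|apply Hf; lia].
Qed.
End ContinuousWithin.

(* A space-time point (x, t) is encoded as p : nat -> R with x = (p 0, ..., p (n-1))
   and t = p n. *)
Definition space (n : nat) (p : nat -> R) : Pt := fun i => if Nat.ltb i n then p i else 0.

Definition spacetime (n : nat) (y : Pt) (s : R) : nat -> R :=
  fun i => if Nat.ltb i n then y i else if Nat.eqb i n then s else 0.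

Lemma space_in_Rn n p : in_Rn n (space n p).
Proof. intros i Hi. unfold space. destruct (Nat.ltb_spec i n); [lia|reflexivity]. Qed.

Lemma space_lt n p i : (i < n)%nat -> space n p i = p i.
Proof. intros Hi. unfold space. destruct (Nat.ltb_spec i n); [reflexivity|lia]. Qed.

Lemma space_spacetime n y s : in_Rn n y -> space n (spacetime n y s) = y.
Proof.
  intros Hy. apply functional_extensionality. intros i. unfold space, spacetime.
  destruct (Nat.ltb_spec i n); [reflexivity|]. symmetry. apply Hy. lia.
Qed.

Lemma spacetime_time n y s : spacetime n y s n = s.
Proof. unfold spacetime. destruct (Nat.ltb_spec n n); [lia|]. now rewrite Nat.eqb_refl. Qed.

Lemma continuous_within_sqnorm_space N D n :
  (n <= N)%nat -> continuous_within N D (fun p => sqnorm n (space n p)).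
Proof.
  intros HnN.
  replace (fun p => sqnorm n (space n p)) with (fun p => sumR n (fun i => p i * p i)).
  - apply continuous_within_sumR. intros i Hi.
    apply continuous_within_mult; apply continuous_within_coord; lia.
  - apply functional_extensionality. intros p. apply sumR_ext. intros i Hi.
    now rewrite space_lt.
Qed.

Lemma continuous_within_on_Q1bar n u D :
  continuous_on_Q1bar n u -> (forall p, D p -> inQ1bar n (space n p) (p n)) ->
  continuous_within (S n) D (fun p => u (space n p) (p n)).
Proof.
  intros Hu HD p Hp eps Heps.
  destruct (Hu _ _ (HD p Hp) eps Heps) as [del [Hdel Hu']].
  pose proof (pos_INR n) as Hn.
  set (d := del / (INR n + 1)).
  assert (Hd : 0 < d) by (apply Rdiv_lt_0_compat; lra).
  assert (Hdel_d : del = d * (INR n + 1)) by (unfold d; field; lra).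
  exists d. split; [exact Hd|]. intros q Hq Hqp. apply Hu'; [now apply HD| |].
  - eapply Rle_lt_trans.
    + apply sqnorm_le_coord_bound with (d := d). intros i Hi. unfold vsub.
      rewrite !space_lt by exact Hi. left. apply Hqp. lia.
    + rewrite Hdel_d. nra.
  - eapply Rlt_le_trans; [apply Hqp; lia|]. nra.
Qed.

Definition origin : Pt := fun _ => 0.

Lemma sqnorm_origin n : sqnorm n origin = 0.
Proof. unfold sqnorm, origin. rewrite (sumR_ext n _ (fun _ => 0)) by (intros; ring). rewrite sumR_const. ring. Qed.

Lemma origin_inB1 n : inB1 n origin.
Proof. split; [intros i _; reflexivity|]. rewrite sqnorm_origin. lra. Qed.

Lemma exists_pos_le_all n (f : nat -> R) :
  (forall i, (i < n)%nat -> 0 < f i) -> exists r, 0 < r /\ forall i, (i < n)%nat -> r <= f i.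
Proof.
  induction n as [|n IH]; intros H.
  - exists 1. split; [lra|]. intros; lia.
  - destruct IH as [r [Hr Hr2]]; [intros; apply H; lia|].
    exists (Rmin r (f n)). split; [apply Rmin_pos; [exact Hr|apply H; lia]|].
    intros i Hi. destruct (Nat.eq_dec i n) as [->|Hne]; [apply Rmin_r|].
    eapply Rle_trans; [apply Rmin_l|]. apply Hr2; lia.
Qed.

(** * Paraboloids as test functions *)

Definition parab (n : nat) (K k L : R) : Pt -> R -> R := fun x t => K + k * sqnorm n x + L * t.

Lemma C21_parab n K k L :
  C21 n (parab n K k L) (fun i x _ => 2 * k * x i)
    (fun i j _ _ => if Nat.eqb i j then 2 * k else 0) (fun _ _ => L).
Proof.
  unfold C21, parab. split; [|split; [|split]].
  - intros x t _ i Hi. apply is_derive_Reals.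
    apply (is_derive_ext (fun s => K + k * (sqnorm n x + (2 * s * x i + s * s)) + L * t)).
    { intros s. now rewrite sqnorm_vadd_dir. }
    auto_derive; [exact I|ring].
  - intros x t _ i j Hi Hj. apply is_derive_Reals. unfold vadd_dir.
    destruct (Nat.eqb_spec i j) as [<-|Hij].
    + apply (is_derive_ext (fun s => 2 * k * (x i + s))).
      { reflexivity. }
      auto_derive; [exact I|ring].
    + apply (is_derive_ext (fun _ => 2 * k * x i)).
      { intros s. destruct (Nat.eqb_spec i j); [lia|reflexivity]. }
      auto_derive; [exact I|ring].
  - intros x t _. apply is_derive_Reals. auto_derive; [exact I|ring].
  - intros x t _ eps Heps. exists 1. split; [lra|]. intros y s _ _ _.
    rewrite Rminus_diag, Rabs_R0. split; [exact Heps|].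
    intros i j _ _. rewrite Rminus_diag, Rabs_R0. exact Heps.
Qed.

Lemma unif_elliptic_diag_le n lam Lam a x t i :
  unif_elliptic n lam Lam a -> inQ1 n x t -> (i < n)%nat -> a i i x t <= Lam.
Proof.
  intros He Hq Hi.
  set (e := fun j => if Nat.eqb j i then 1 else 0).
  destruct (He x t Hq) as [_ Hform]. destruct (Hform e) as [_ Hup].
  assert (Hnorm : sqnorm n e = 1).
  { unfold sqnorm. rewrite <- (sumR_delta n i 1 Hi). apply sumR_ext. intros j _.
    unfold e. destruct (Nat.eqb j i); ring. }
  assert (Hquad : sumR n (fun k => sumR n (fun j => a k j x t * e k * e j)) = a i i x t).
  { rewrite <- (sumR_delta n i (a i i x t) Hi). apply sumR_ext. intros k _.
    rewrite (sumR_ext n _ (fun j => if Nat.eqb j i then a k i x t * e k else 0))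
      by (intros j _; unfold e; destruct (Nat.eqb_spec j i); [subst|]; ring).
    rewrite sumR_delta by exact Hi. unfold e. destruct (Nat.eqb_spec k i); [subst|]; ring. }
  rewrite Hquad, Hnorm in Hup. lra.
Qed.

Lemma Lop_parab_ge n lam Lam a k L x t :
  unif_elliptic n lam Lam a -> inQ1 n x t -> 0 <= k ->
  L - 2 * k * INR n * Lam <= Lop n a (fun i j _ _ => if Nat.eqb i j then 2 * k else 0) (fun _ _ => L) x t.
Proof.
  intros He Hq Hk. unfold Lop.
  rewrite (sumR_ext n _ (fun i => 2 * k * a i i x t)).
  - assert (Hdiag : sumR n (fun i => 2 * k * a i i x t) <= sumR n (fun _ => 2 * k * Lam)).
    { apply sumR_le. intros i Hi.
      pose proof (unif_elliptic_diag_le n lam Lam a x t i He Hq Hi). nra. }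
    rewrite sumR_const in Hdiag. lra.
  - intros i Hi. rewrite <- (sumR_delta n i (2 * k * a i i x t) Hi). apply sumR_ext. intros j _.
    destruct (Nat.eqb_spec i j), (Nat.eqb_spec j i); subst; try lia; ring.
Qed.

(** * Supersolutions are negated subsolutions *)

Lemma C21_opp n phi phix phixx phit :
  C21 n phi phix phixx phit ->
  C21 n (fun x t => - phi x t) (fun i x t => - phix i x t)
    (fun i j x t => - phixx i j x t) (fun x t => - phit x t).
Proof.
  intros (H1 & H2 & H3 & H4). split; [|split; [|split]].
  - intros x t Hx i Hi. apply derivable_pt_lim_opp. now apply H1.
  - intros x t Hx i j Hi Hj. apply derivable_pt_lim_opp. now apply H2.
  - intros x t Hx. apply derivable_pt_lim_opp. now apply H3.
  - intros x t Hx eps Heps. destruct (H4 x t Hx eps Heps) as [d [Hd Hd']].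
    exists d. split; [exact Hd|]. intros y s Hy Hys Hst. destruct (Hd' y s Hy Hys Hst) as [Ht Hxx].
    split.
    + unfold Rminus. now rewrite <- Ropp_plus_distr, Rabs_Ropp.
    + intros i j Hi Hj. unfold Rminus. rewrite <- Ropp_plus_distr, Rabs_Ropp. now apply Hxx.
Qed.

Lemma Lop_opp n a phixx phit x t :
  Lop n a (fun i j x t => - phixx i j x t) (fun x t => - phit x t) x t = - Lop n a phixx phit x t.
Proof.
  unfold Lop.
  rewrite (sumR_ext n _ (fun i => -1 * sumR n (fun j => a i j x t * phixx i j x t))).
  - rewrite sumR_scal. ring.
  - intros i _. rewrite <- sumR_scal. apply sumR_ext. intros; ring.
Qed.

Lemma visc_super_opp n a u : visc_super n a u -> visc_sub n a (fun x t => - u x t).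
Proof.
  intros Hsup phi phix phixx phit x0 t0 HC Hq Heq [r [Hr Htouch]].
  assert (Hneg : 0 <= Lop n a (fun i j x t => - phixx i j x t) (fun x t => - phit x t) x0 t0).
  { apply (Hsup (fun x t => - phi x t) (fun i x t => - phix i x t)); [now apply C21_opp|exact Hq| |].
    - rewrite Heq. ring.
    - exists r. split; [exact Hr|]. intros y s Hys. specialize (Htouch y s Hys). lra. }
  rewrite Lop_opp in Hneg. lra.
Qed.

Lemma continuous_on_Q1bar_opp n u :
  continuous_on_Q1bar n u -> continuous_on_Q1bar n (fun x t => - u x t).
Proof.
  intros Hu x t Hx eps Heps. destruct (Hu x t Hx eps Heps) as [d [Hd Hd']].
  exists d. split; [exact Hd|]. intros y s Hy Hys Hst.
  unfold Rminus. rewrite <- Ropp_plus_distr, Rabs_Ropp. now apply Hd'.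
Qed.

Lemma osc_B1_le_opp n u t A : osc_B1_le n u t A -> osc_B1_le n (fun x t => - u x t) t A.
Proof. intros Hosc x y Hx Hy. specialize (Hosc y x Hy Hx). lra. Qed.

(** * Comparison with a paraboloid barrier *)

Section Comparison.
Variables (n : nat) (lam Lam : R) (a : nat -> nat -> Pt -> R -> R) (u : Pt -> R -> R) (A : R).
Hypotheses (Hn : (1 <= n)%nat) (HLam : 0 < Lam) (He : unif_elliptic n lam Lam a)
  (Hu : continuous_on_Q1bar n u) (Hsub : visc_sub n a u) (HA : 0 < A)
  (Hosc : forall t, -1 <= t <= 0 -> osc_B1_le n u t A).

(* The cube [-width, width]^n lies in B_1; the paraboloid's curvature makes it exceed the
   oscillation bound A on the lateral boundary of the cube, and its time slope makes it a
   strict supersolution. *)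
Definition width := / (2 * INR n).
Definition curv := 2 * A / (width * width).
Definition slope := 2 * curv * INR n * Lam + A.

Lemma INR_n_ge1 : 1 <= INR n.
Proof. now apply (le_INR 1). Qed.

Lemma width_pos : 0 < width.
Proof. pose proof INR_n_ge1. unfold width. apply Rinv_0_lt_compat. lra. Qed.

Lemma n_width_sq_lt1 : INR n * (width * width) < 1.
Proof.
  pose proof INR_n_ge1. unfold width.
  replace (INR n * (/ (2 * INR n) * / (2 * INR n))) with (/ (4 * INR n)) by (field; lra).
  rewrite <- Rinv_1. apply Rinv_lt_contravar; lra.
Qed.

Lemma curv_width_sq : curv * (width * width) = 2 * A.
Proof. pose proof width_pos. unfold curv. field. lra. Qed.

Lemma curv_pos : 0 < curv.
Proof. pose proof width_pos. unfold curv. apply Rdiv_lt_0_compat; nra. Qed.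

Lemma slope_pos : 0 < slope.
Proof.
  pose proof curv_pos. pose proof INR_n_ge1. unfold slope.
  assert (0 < curv * INR n * Lam) by (apply Rmult_lt_0_compat; [apply Rmult_lt_0_compat|]; lra).
  lra.
Qed.

Lemma slope_eq : slope = (1 + 16 * INR n ^ 3 * Lam) * A.
Proof. pose proof INR_n_ge1. unfold slope, curv, width. field. lra. Qed.

Definition cyl (s t : R) : (nat -> R) -> Prop :=
  inbox (S n) (fun i => if Nat.ltb i n then - width else s) (fun i => if Nat.ltb i n then width else t).

Definition barrier (s : R) : Pt -> R -> R := parab n (u origin s + A - slope * s) curv slope.

Definition gap (s : R) (p : nat -> R) : R := u (space n p) (p n) - barrier s (space n p) (p n).

Lemma cyl_spec s t p : cyl s t p ->
  (forall i, (i < n)%nat -> Rabs (space n p i) <= width) /\ inB1 n (space n p) /\ s <= p n <= t.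
Proof.
  intros [Hb _].
  assert (Hcube : forall i, (i < n)%nat -> Rabs (space n p i) <= width).
  { intros i Hi. rewrite space_lt by exact Hi. destruct (Hb i ltac:(lia)) as [Hlo Hhi].
    destruct (Nat.ltb_spec i n); [|lia]. apply Rabs_le. lra. }
  split; [exact Hcube|split; [split|]].
  - apply space_in_Rn.
  - eapply Rle_lt_trans; [apply sqnorm_le_coord_bound with (d := width); exact Hcube|]. apply n_width_sq_lt1.
  - destruct (Hb n ltac:(lia)) as [Hlo Hhi]. rewrite Nat.ltb_irrefl in Hlo, Hhi. lra.
Qed.

Lemma spacetime_in_cyl s t y sg :
  in_Rn n y -> (forall i, (i < n)%nat -> Rabs (y i) <= width) -> s <= sg <= t ->
  cyl s t (spacetime n y sg).
Proof.
  intros Hy Hcube Hsg. split.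
  - intros i Hi. unfold spacetime. destruct (Nat.ltb_spec i n) as [Hin|Hni].
    + pose proof (Hcube i Hin). unfold Rabs in *. destruct (Rcase_abs (y i)); lra.
    + destruct (Nat.eqb_spec i n); [exact Hsg|lia].
  - intros i Hi. unfold spacetime. destruct (Nat.ltb_spec i n); [lia|].
    destruct (Nat.eqb_spec i n); [lia|reflexivity].
Qed.

Lemma origin_in_cube i : Rabs (origin i) <= width.
Proof. unfold origin. rewrite Rabs_R0. left. apply width_pos. Qed.

Lemma gap_spacetime s y sg : in_Rn n y -> gap s (spacetime n y sg) = u y sg - barrier s y sg.
Proof. intros Hy. unfold gap. now rewrite space_spacetime, spacetime_time. Qed.

Lemma continuous_within_gap s t : -1 <= s -> t <= 0 -> continuous_within (S n) (cyl s t) (gap s).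
Proof.
  intros Hs Ht. unfold gap, barrier, parab.
  apply continuous_within_minus; [apply continuous_within_on_Q1bar; [exact Hu|]|].
  - intros p Hp. destruct (cyl_spec s t p Hp) as (_ & [Hin HB] & Hpn).
    repeat split; try lra; exact Hin.
  - apply continuous_within_plus; [apply continuous_within_plus|].
    + apply continuous_within_const.
    + apply continuous_within_scal, continuous_within_sqnorm_space. lia.
    + apply continuous_within_scal, continuous_within_coord. lia.
Qed.

Section Maximizer.
Variables (s t : R) (c : nat -> R).
Hypotheses (Hs : -1 <= s) (Hst : s <= t) (Ht : t <= 0) (Hc : cyl s t c)
  (Hmax : forall q, cyl s t q -> gap s q <= gap s c).

Lemma gap_max_off_lateral i : (i < n)%nat -> Rabs (c i) < width.
Proof.
  intros Hi. destruct (cyl_spec s t c Hc) as (Hcube & HB & Hcn).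
  rewrite <- (space_lt n c i Hi).
  destruct (Rle_lt_or_eq_dec _ _ (Hcube i Hi)) as [Hlt|Heq]; [exact Hlt|exfalso].
  pose proof (Hmax _ (spacetime_in_cyl s t origin (c n) (proj1 (origin_inB1 n)) (fun i _ => origin_in_cube i) Hcn)) as Hm.
  rewrite gap_spacetime in Hm by apply origin_inB1.
  unfold gap, barrier, parab in Hm. rewrite sqnorm_origin in Hm.
  assert (Hosc_c : u (space n c) (c n) - u origin (c n) <= A)
    by (apply Hosc; [lra|exact HB|apply origin_inB1]).
  assert (Hfar : curv * (width * width) <= curv * sqnorm n (space n c)).
  { apply Rmult_le_compat_l; [left; apply curv_pos|].
    replace (width * width) with (space n c i * space n c i)
      by (rewrite <- Heq; unfold Rabs; destruct (Rcase_abs (space n c i)); ring).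
    now apply sqnorm_ge_coord. }
  rewrite curv_width_sq in Hfar. lra.
Qed.

Lemma barrier_touches_above : s < c n ->
  exists r, 0 < r /\ forall y sg, in_pnbhd n r (space n c) (c n) y sg ->
    u y sg <= parab n (u origin s + A - slope * s + gap s c) curv slope y sg.
Proof.
  intros Hlater.
  destruct (exists_pos_le_all (S n) (fun i => if Nat.ltb i n then width - Rabs (c i) else c n - s))
    as [r [Hr Hr']].
  { intros i Hi. destruct (Nat.ltb_spec i n) as [Hin|_]; [|lra].
    pose proof (gap_max_off_lateral i Hin). lra. }
  exists r. split; [exact Hr|]. intros y sg ([[Hy _] _] & Hyd & Hsg).
  assert (Hcube : forall i, (i < n)%nat -> Rabs (y i) <= width).
  { intros i Hi. specialize (Hr' i ltac:(lia)). rewrite (proj2 (Nat.ltb_lt i n) Hi) in Hr'.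
    assert (Hyc : Rabs (y i - c i) < r).
    { apply Rabs_lt_of_sq_lt; [exact Hr|]. eapply Rle_lt_trans; [|exact Hyd].
      pose proof (sqnorm_ge_coord n (vsub y (space n c)) i Hi) as Hcoord.
      unfold vsub in Hcoord. now rewrite space_lt in Hcoord. }
    replace (y i) with (c i + (y i - c i)) by ring.
    pose proof (Rabs_triang (c i) (y i - c i)). lra. }
  specialize (Hr' n ltac:(lia)). rewrite Nat.ltb_irrefl in Hr'.
  destruct (cyl_spec s t c Hc) as (_ & _ & Hcn).
  pose proof (Hmax _ (spacetime_in_cyl s t y sg Hy Hcube ltac:(lra))) as Hm.
  rewrite gap_spacetime in Hm by exact Hy. unfold barrier, parab in *. lra.
Qed.

Lemma gap_max_at_initial_time : c n = s.
Proof.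
  destruct (cyl_spec s t c Hc) as (_ & HB & Hcn).
  destruct (Rle_lt_or_eq_dec _ _ (proj1 Hcn)) as [Hlater|Heq]; [exfalso|easy].
  assert (HQ : inQ1 n (space n c) (c n)) by (split; [exact HB|lra]).
  pose proof (Lop_parab_ge n lam Lam a curv slope (space n c) (c n) He HQ
    ltac:(left; apply curv_pos)) as Hstrict.
  assert (Hsub_c : Lop n a (fun i j _ _ => if Nat.eqb i j then 2 * curv else 0)
    (fun _ _ => slope) (space n c) (c n) <= 0).
  { apply (Hsub _ _ _ _ _ _ (C21_parab n (u origin s + A - slope * s + gap s c) curv slope) HQ).
    - unfold gap, barrier, parab. ring.
    - now apply barrier_touches_above. }
  unfold slope at 1 in Hstrict. lra.
Qed.

Lemma gap_max_nonpos : gap s c <= 0.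
Proof.
  destruct (cyl_spec s t c Hc) as (_ & HB & _).
  assert (Hosc_s : u (space n c) s - u origin s <= A)
    by (apply Hosc; [lra|exact HB|apply origin_inB1]).
  pose proof (sqnorm_nonneg n (space n c)). pose proof curv_pos.
  unfold gap, barrier, parab. rewrite gap_max_at_initial_time. nra.
Qed.
End Maximizer.

Lemma drift_at_origin_le s t : -1 <= s -> s <= t -> t <= 0 -> u origin t <= u origin s + A + slope.
Proof.
  intros Hs Hst Ht.
  assert (Hex : exists c, cyl s t c /\ forall q, cyl s t q -> gap s q <= gap s c).
  { apply BoxMax.box_max; [|now apply continuous_within_gap].
    intros i _. destruct (Nat.ltb i n); [pose proof width_pos|]; lra. }
  destruct Hex as [c [Hc Hmax]].
  pose proof (Hmax _ (spacetime_in_cyl s t origin t (proj1 (origin_inB1 n)) (fun i _ => origin_in_cube i) ltac:(lra))) as Hm.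
  pose proof (gap_max_nonpos s t c Hs Hst Ht Hc Hmax) as Hneg.
  rewrite gap_spacetime in Hm by apply origin_inB1.
  unfold barrier, parab in Hm. rewrite sqnorm_origin in Hm.
  pose proof slope_pos. nra.
Qed.

End Comparison.

Theorem lemma4p3 :
  forall (n : nat) (Lam : R), (1 <= n)%nat -> 0 < Lam ->
  exists C : R, 0 < C /\
    forall (lam : R) (a : nat -> nat -> Pt -> R -> R) (u : Pt -> R -> R) (A : R),
      0 < lam -> lam <= Lam ->
      unif_elliptic n lam Lam a ->
      continuous_on_Q1bar n u ->
      visc_solution n a u ->
      0 < A ->
      (forall t, -1 <= t <= 0 -> osc_B1_le n u t A) ->
      osc_Q1_le n u (C * A).
Proof.
  intros n Lam Hn HLam.
  pose proof (pow_le (INR n) 3 (pos_INR n)).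
  exists (4 + 16 * INR n ^ 3 * Lam). split; [nra|].
  intros lam a u A _ _ He Hu [Hsub Hsup] HA Hosc.
  assert (Hdrift : forall s t, -1 <= s <= 0 -> -1 <= t <= 0 ->
    u origin t - u origin s <= A + slope n Lam A).
  { intros s t Hs Ht. destruct (Rle_dec s t).
    - pose proof (drift_at_origin_le n lam Lam a u A Hn HLam He Hu Hsub HA Hosc s t). lra.
    - pose proof (drift_at_origin_le n lam Lam a (fun x t => - u x t) A Hn HLam He
        (continuous_on_Q1bar_opp n u Hu) (visc_super_opp n a u Hsup) HA
        (fun t Ht => osc_B1_le_opp n u t A (Hosc t Ht)) t s). lra. }
  intros x t y s [Hx Ht] [Hy Hs].
  pose proof (Hosc t ltac:(lra) x origin Hx (origin_inB1 n)).
  pose proof (Hosc s ltac:(lra) origin y (origin_inB1 n) Hy).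
  pose proof (Hdrift s t ltac:(lra) ltac:(lra)).
  rewrite slope_eq in * by exact Hn. lra.
Qed.
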